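(* Fix an integer $k\geq 3$. Let $\mathcal{A}$ be any deterministic LOCAL algorithm which, on every $k$-partially $k$-colorable graph (with any valid assignment of identifiers), outputs a $k$-partial $k$-coloring. For $n\ge 1$ let $T_{\mathcal{A}}(n)$ denote the maximum, over all $n$-vertex $k$-partially $k$-colorable graphs $G$ and all valid identifier assignments, of the number of rounds $\mathcal{A}$ uses on $G$. Then $T_{\mathcal{A}}(n)$ is not $o(n/k^3)$; that is, $T_{\mathcal{A}}(n)=\Omega(n/k^3)$ (for infinitely many $n$, with the implied constant independent of $n$), which for constant $k$ is $\Omega(n)$.
   Context: All graphs are finite, simple and undirected; $\deg_G(v)$ denotes the degree of $v$. For integers $k\geq 0$, $c\geq 1$, a $k$-partial $c$-coloring of $G=(V,E)$ is a map $\gamma:V\to\{1,\dots,c\}$ such that every vertex $v$ has at least $\min\{k,\deg_G(v)\}$ neighbors $u$ with $\gamma(u)\neq\gamma(v)$; $G$ is $k$-partially $c$-colorable if such a map exists. LOCAL model: the input graph $G$ on $n$ vertices is the communication network; each vertex has a distinct identifier from $\{1,\dots,n^d\}$ for a fixed constant $d\geq 1$ (a valid identifier assignment), initially knows only its identifier and the identifier range, and computation proceeds in synchronous rounds in which every vertex may send an arbitrarily large message to each neighbor, receive its neighbors' messages, and perform arbitrary local computation; after some number of rounds each vertex outputs (here, its color) and terminates. The complexity is the number of rounds. Equivalently, the output of a vertex after $t$ rounds is a function of its $t$-radius view: the subgraph of $G$ induced by the vertices at distance at most $t$ from it, together with their identifiers. *)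

From mathcomp Require Import all_boot.
Set Implicit Arguments. Unset Strict Implicit. Unset Printing Implicit Defensive.

(* Graphs on n vertices: vertex set 'I_n, adjacency e : rel 'I_n, assumed
   symmetric and irreflexive (finite simple undirected graph). *)

Definition degree (n : nat) (e : rel 'I_n) (v : 'I_n) : nat :=
  #|[set u | e v u]|.

Definition partial_coloring (k c n : nat) (e : rel 'I_n) (gamma : 'I_n -> 'I_c) : Prop :=
  forall v : 'I_n, minn k (degree e v) <= #|[set u | e v u & gamma u != gamma v]|.

Definition partially_colorable (k c n : nat) (e : rel 'I_n) : Prop :=
  exists gamma : 'I_n -> 'I_c, partial_coloring k e gamma.

(* Identifiers: values in 'I_(n^d).+1, restricted to be nonzero, i.e. in {1..n^d}. *)
Definition idT (d n : nat) := 'I_(n ^ d).+1.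

Definition valid_ids (d n : nat) (id : 'I_n -> idT d n) : Prop :=
  injective id /\ forall v, 0 < val (id v).

Fixpoint ball (n : nat) (e : rel 'I_n) (t : nat) (v : 'I_n) : {set 'I_n} :=
  match t with
  | 0 => [set v]
  | t'.+1 => let B := ball e t' v in B :|: [set u | [exists w in B, e w u]]
  end.

(* The t-radius view of v: the subgraph induced by the ball, together with
   identifiers. Since identifiers are distinct, this identifier-labelled rooted
   graph is represented canonically by (root id, set of ids in the ball,
   set of (ordered) id pairs forming edges of the induced subgraph). *)
Definition view (d n : nat) := (idT d n * {set idT d n} * {set idT d n * idT d n})%type.

Definition view_of (d n : nat) (e : rel 'I_n) (id : 'I_n -> idT d n) (t : nat) (v : 'I_n)
  : view d n :=
  (id v,
   [set id u | u in ball e t v],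
   [set (id u, id w) | u in ball e t v, w in [set w in ball e t v | e u w]]).

(* A deterministic LOCAL algorithm (for fixed k, d): a vertex knows the identifier
   range {1..n^d}, hence n.  After t rounds its state is a function of t and of its
   t-radius view; [A n t view = Some c] means it stops at round t with colour c,
   [None] means it continues.  The number of rounds used at v is the first t with
   [A n t (view_of ... t v) <> None]. *)
Definition local_alg (d k : nat) := forall n : nat, nat -> view d n -> option 'I_k.

Definition outputs_at (d k n : nat) (A : local_alg d k) (e : rel 'I_n)
  (id : 'I_n -> idT d n) (v : 'I_n) (t : nat) (c : 'I_k) : Prop :=
  A n t (view_of e id t v) = Some c /\
  forall s, s < t -> A n s (view_of e id s v) = None.

Definition solves_partial_coloring (d k : nat) (A : local_alg d k) : Prop :=
  forall (n : nat) (e : rel 'I_n), symmetric e -> irreflexive e ->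
    partially_colorable k k e ->
    forall id : 'I_n -> idT d n, valid_ids id ->
      exists gamma : 'I_n -> 'I_k,
        partial_coloring k e gamma /\
        forall v, exists t, outputs_at A e id v t (gamma v).

From mathcomp Require Import all_boot zify.
From Stdlib Require Import Classical.
Set Implicit Arguments. Unset Strict Implicit. Unset Printing Implicit Defensive.

(* Glue [2L] copies of the clique [K_(k+1)] minus an edge into a chain, each
   copy sharing one end with the next.  The inner vertices have degree [k], so
   in any k-partial k-colouring the two ends of a copy get the same colour, and
   so do the two ends of the whole chain.  Replacing the middle copy by a single
   edge forces the two ends of the chain to get different colours.  Neither end
   sees the middle within [L - 2] rounds, so an algorithm stopping that early at
   both ends would output the same colours there on both graphs; hence one end
   runs for about [L = Omega(n / k)] rounds. *)

Lemma ball_potential_le n (e : rel 'I_n) (p : 'I_n -> nat) :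
  (forall x y, e x y -> p y <= (p x).+1) ->
  forall t v u, u \in ball e t v -> p u <= p v + t.
Proof.
move=> p_lip; elim=> [|t IH] v u /=.
  by rewrite inE => /eqP ->; rewrite addn0.
rewrite !inE => /orP [/IH|/existsP [w /andP [/IH w_le /p_lip]]]; lia.
Qed.

Lemma ball_subset_succ n (e : rel 'I_n) t v : ball e t v \subset ball e t.+1 v.
Proof. exact: subsetUl. Qed.

Section Locality.

Variables (n : nat) (e1 e2 : rel 'I_n) (S : {set 'I_n}).
Hypothesis e12_agree : forall x y, x \in S -> e1 x y = e2 x y.

Lemma ball_agree t v : ball e1 t v \subset S -> ball e1 t v = ball e2 t v.
Proof.
elim: t v => [//|t IH] v ballS.
have ballS' : ball e1 t v \subset S := subset_trans (ball_subset_succ _ _ _) ballS.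
rewrite /= -(IH _ ballS'); congr (_ :|: _); apply/setP => u; rewrite !inE.
apply/existsP/existsP => -[w /andP [w_in wu]]; exists w; rewrite w_in /=;
  by [rewrite -e12_agree // (subsetP ballS') | rewrite e12_agree // (subsetP ballS')].
Qed.

Lemma view_agree d (id : 'I_n -> idT d n) t v :
  ball e1 t v \subset S -> view_of e1 id t v = view_of e2 id t v.
Proof.
move=> ballS; rewrite /view_of -(ball_agree ballS); congr (_, _).
apply/setP => z; apply/imset2P/imset2P => -[u w u_in w_in ->]; exists u w => //;
  move: w_in; rewrite !inE => /andP [-> uw] /=;
  by [rewrite -e12_agree // (subsetP ballS) | rewrite e12_agree // (subsetP ballS)].
Qed.

End Locality.

Lemma outputs_agree d k n (A : local_alg d k) (e1 e2 : rel 'I_n) id v s t1 t2 c1 c2 :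
  (forall r, r <= s -> view_of e1 id r v = view_of e2 id r v) ->
  A n s (view_of e1 id s v) <> None ->
  outputs_at A e1 id v t1 c1 -> outputs_at A e2 id v t2 c2 -> c1 = c2.
Proof.
move=> views stop_s [out1 run1] [out2 run2].
have t1_le : t1 <= s by rewrite leqNgt; apply/negP => /run1.
case: (ltngtP t1 t2) => [lt|lt|t12]; last subst t2.
- by move: (run2 _ lt); rewrite -views // out1.
- by move: (run1 _ lt); rewrite views ?out2 //; apply: leq_trans (ltnW lt) t1_le.
- by move: out1; rewrite views // out2 => -[].
Qed.

Lemma partial_coloring_low_degree k c n (e : rel 'I_n) (gamma : 'I_n -> 'I_c) v u :
  partial_coloring k e gamma -> degree e v <= k -> e v u -> gamma u != gamma v.
Proof.
move=> /(_ v); rewrite /degree => colv deg_v vu; move: colv.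
rewrite (minn_idPr deg_v) => card_le.
have sub : [set u | e v u & gamma u != gamma v] \subset [set u | e v u].
  by apply/subsetP => x; rewrite !inE => /andP [].
have eq_nbrs : [set u | e v u & gamma u != gamma v] = [set u | e v u].
  by apply/eqP; rewrite eqEcard sub.
have : u \in [set u | e v u] by rewrite inE.
by rewrite -eq_nbrs inE => /andP [].
Qed.

Lemma proper_partial_coloring k c n (e : rel 'I_n) (gamma : 'I_n -> 'I_c) :
  (forall v u, e v u -> gamma u != gamma v) -> partial_coloring k e gamma.
Proof.
move=> proper v; rewrite /degree.
have -> : [set u | e v u & gamma u != gamma v] = [set u | e v u].
  by apply/setP => u; rewrite !inE; case vu: (e v u); rewrite //= proper.
exact: geq_minr.
Qed.

Lemma degree_le_param k m (e : rel 'I_m.+1) v (g : 'I_k -> nat) :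
  (forall u, e v u -> exists j, val u = g j) -> degree e v <= k.
Proof.
move=> nbrs; rewrite /degree.
apply: (@leq_trans #|[set inord (g j) | j : 'I_k] : {set 'I_m.+1}|).
  apply: subset_leq_card; apply/subsetP => u; rewrite inE => /nbrs [j uj].
  by apply/imsetP; exists j => //; rewrite -uj inord_val.
by apply: (leq_trans (leq_imset_card _ _)); rewrite card_ord.
Qed.

Lemma forall_or_counterexample (T : Type) (P Q : T -> Prop) :
  (forall x, P x -> Q x) \/ exists x, P x /\ ~ Q x.
Proof.
case: (classic (exists x, P x /\ ~ Q x)) => [|no_cex]; [by right | left].
by move=> x Px; apply: NNPP => nQx; apply: no_cex; exists x.
Qed.

Section BlockArith.

Variable k : nat.

Lemma divn_block q r : r < k -> (k * q + r) %/ k = q.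
Proof. by move=> r_lt; rewrite mulnC divnMDl ?divn_small //; lia. Qed.

Lemma modn_block q r : r < k -> (k * q + r) %% k = r.
Proof. by move=> r_lt; rewrite mulnC modnMDl modn_small. Qed.

Lemma block_inj q r q' r' : r < k -> r' < k -> k * q + r = k * q' + r' -> q = q' /\ r = r'.
Proof.
move=> r_lt r'_lt eq_qr; split; first by rewrite -(divn_block q r_lt) eq_qr divn_block.
by rewrite -(modn_block q r_lt) eq_qr modn_block.
Qed.

Lemma divn_block_end q : 0 < k -> (k * q + k) %/ k = q.+1.
Proof. by move=> k_gt0; rewrite -mulnSr mulKn. Qed.

Lemma modn_block_end q : (k * q + k) %% k = 0.
Proof. by rewrite -mulnSr modnMr. Qed.

Lemma block_decomp x : 0 < k -> exists q r, r < k /\ x = k * q + r.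
Proof. by move=> k_gt0; exists (x %/ k), (x %% k); rewrite ltn_pmod // mulnC -divn_eq. Qed.

Lemma modn_succ a : a < k -> a.+1 %% k = if a.+1 == k then 0 else a.+1.
Proof. by move=> a_lt; case: eqP => [->|?]; [rewrite modnn | rewrite modn_small //; lia]. Qed.

End BlockArith.

(* The vertices [0..m] with [m = k * 2L] form a chain of [2L] gadgets: gadget [q]
   is the clique on [k q, ..., k q + k] minus the edge [{k q, k q + k}], and
   consecutive gadgets share an endpoint.  In the [cut] version, gadget [L] is
   replaced by the single edge [{k L, k L + k}].  [chain_lt k L cut x y] lists
   the edges [x < y] by their smaller end. *)
Definition chain_lt (k L : nat) (cut : bool) (x y : nat) : bool :=
  if cut && (x %/ k == L) then (x == k * L) && (y == k * L + k)
  else [&& x < y, y <= k * (x %/ k) + k & ~~ ((x %% k == 0) && (y == k * (x %/ k) + k))].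

Definition chain_adj k L cut x y := chain_lt k L cut x y || chain_lt k L cut y x.

Definition chain k L cut m : rel 'I_m := fun x y => chain_adj k L cut (val x) (val y).
Arguments chain : clear implicits.

Lemma chain_lt_cut k L x y : chain_lt k L true x y =
  if x %/ k == L then (x == k * L) && (y == k * L + k) else chain_lt k L false x y.
Proof. by rewrite /chain_lt /=; case: (x %/ k == L). Qed.

Lemma chain_lt_uncut k L (cut : bool) a b :
  chain_lt k L cut a b -> (cut -> a %/ k != L) -> chain_lt k L false a b.
Proof. by case: cut => //; rewrite chain_lt_cut => ab /(_ isT) /negbTE aL; rewrite aL in ab. Qed.

Lemma chain_lt_shape k L x y : 0 < k -> chain_lt k L false x y ->
  exists q r, r < k /\ x = k * q + r /\
   ((exists r', r < r' < k /\ y = k * q + r') \/ (0 < r /\ y = k * q + k)).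
Proof.
move=> k_gt0; have [q [r [r_lt ->]]] := block_decomp x k_gt0.
rewrite /chain_lt /= divn_block // modn_block // => /and3P [xy y_le not_ends].
exists q, r; split=> //; split=> //.
have [y_lt|y_ge] := ltnP y (k * q + k).
  left; exists (y - k * q); split; [apply/andP; split|]; lia.
right; split; last by lia.
have y_eq : y = k * q + k by lia.
by move: not_ends; rewrite y_eq eqxx andbT lt0n.
Qed.

Lemma chain_adj_block_close k L x y : 0 < k -> chain_adj k L false x y ->
  y %/ k <= (x %/ k).+1 /\ x %/ k <= (y %/ k).+1.
Proof.
move=> k_gt0.
suff close a b : chain_lt k L false a b -> b %/ k <= (a %/ k).+1 /\ a %/ k <= (b %/ k).+1.
  by case/orP => /close; lia.
move=> /(chain_lt_shape k_gt0) [q [r [r_lt [-> [[r' [/andP [_ r'_lt] ->]]|[_ ->]]]]]].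
  by rewrite !divn_block //; lia.
by rewrite divn_block_end // divn_block //; lia.
Qed.

Lemma chain_adj_cut_far k L x y : 0 < k -> (x %/ k < L \/ L.+2 <= x %/ k) ->
  chain_adj k L false x y = chain_adj k L true x y.
Proof.
move=> k_gt0 x_far; rewrite /chain_adj !chain_lt_cut.
have -> : (x %/ k == L) = false by apply/eqP; lia.
congr (_ || _); case: eqP => // y_blk.
have -> : (y == k * L) && (x == k * L + k) = false.
  apply/negP => /andP [_ /eqP x_eq]; move: x_far; rewrite x_eq divn_block_end //; lia.
apply/negP => /(chain_lt_shape k_gt0) [q [r [r_lt [y_eq [[r' [/andP [_ r'_lt] x_eq]]|[_ x_eq]]]]]].
  by move: x_far y_blk; rewrite x_eq y_eq !divn_block //; lia.
by move: x_far y_blk; rewrite x_eq y_eq divn_block_end // divn_block //; lia.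
Qed.

Lemma chain_lt_in_gadget k L (cut : bool) i j j' : 0 < k -> (cut -> i != L) ->
  j < j' <= k -> ~~ ((j == 0) && (j' == k)) -> chain_lt k L cut (k * i + j) (k * i + j').
Proof.
move=> k_gt0 i_uncut /andP [jj' j'_le] not_ends; have j_lt : j < k by lia.
rewrite /chain_lt divn_block // modn_block //.
have -> : cut && (i == L) = false by case: cut i_uncut => // /(_ isT) /negbTE.
by rewrite eqn_add2l not_ends; apply/andP; split; lia.
Qed.

Lemma chain_adj_inner_nbrs k L (cut : bool) i j u : 0 < k -> (cut -> i != L) -> 0 < j < k ->
  chain_adj k L cut (k * i + j) u ->
  exists j' : 'I_k, u = (if val j' == j then k * i + k else k * i + val j').
Proof.
move=> k_gt0 i_uncut /andP [j_gt0 j_lt]; case/orP.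
  move/chain_lt_uncut; rewrite divn_block // => /(_ i_uncut) /(chain_lt_shape k_gt0).
  move=> [q [r [r_lt [/block_inj eq_qr [[r' [/andP [r_lt' r'_lt] ->]]|[_ ->]]]]]];
    case: (eq_qr j_lt r_lt) => ? ?; subst.
    by exists (Ordinal r'_lt); rewrite /=; case: eqP => //; lia.
  by exists (Ordinal j_lt); rewrite /= eqxx.
case u_cut : (cut && (u %/ k == L)).
  move: u_cut => /andP [cutT uL]; rewrite cutT chain_lt_cut uL => /andP [_ /eqP u_eq].
  by move: (f_equal (modn^~ k) u_eq); rewrite modn_block // modn_block_end; lia.
move/chain_lt_uncut => /(_ _) u_lt.
have {u_lt} : chain_lt k L false u (k * i + j).
  by apply: u_lt => cutT; move: u_cut; rewrite cutT /= => ->.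
move/(chain_lt_shape k_gt0) => [q [r [r_lt [-> [[r' [/andP [r_lt' r'_lt] u_eq]]|[_ u_eq]]]]]].
  case: (block_inj j_lt r'_lt u_eq) => ? ?; subst.
  by exists (Ordinal r_lt); rewrite /=; case: eqP => //; lia.
by move: (f_equal (modn^~ k) u_eq); rewrite modn_block // modn_block_end; lia.
Qed.

Lemma chain_adj_cut_nbrs k L u : 0 < k -> 0 < L -> chain_adj k L true (k * L) u ->
  exists j' : 'I_k, u = if val j' == 0 then k * L + k else k * L.-1 + val j'.
Proof.
move=> k_gt0 L_gt0; rewrite /chain_adj !chain_lt_cut.
rewrite -[k * L]addn0 divn_block // addn0 !eqxx /=.
case/orP => [/eqP ->|]; first by exists (Ordinal k_gt0).
case: eqP => [_ /andP [/eqP -> /eqP]|_]; first by lia.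
move/(chain_lt_shape k_gt0) => [q [r [r_lt [-> [[r' [/andP [r_lt' r'_lt] kL_eq]]|[r_gt0 kL_eq]]]]]].
  by move: (f_equal (modn^~ k) kL_eq); rewrite modn_block // -[k * L]addn0 modn_block //; lia.
have -> : q = L.-1.
  by move: (f_equal (divn^~ k) kL_eq); rewrite divn_block_end // -[k * L]addn0 divn_block //; lia.
by exists (Ordinal r_lt); rewrite /=; case: eqP => //; lia.
Qed.

Lemma chain_inner_degree_le k L (cut : bool) m i j : 0 < k -> (cut -> i != L) -> 0 < j < k ->
  k * i + j <= m -> degree (chain k L cut m.+1) (inord (k * i + j)) <= k.
Proof.
move=> k_gt0 i_uncut j_inner v_le.
apply: (degree_le_param (g := fun j' : 'I_k => if val j' == j then k * i + k else k * i + val j')).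
by move=> u; rewrite /chain /= inordK //; apply: chain_adj_inner_nbrs.
Qed.

Lemma chain_cut_degree_le k L m : 0 < k -> 0 < L -> k * L <= m ->
  degree (chain k L true m.+1) (inord (k * L)) <= k.
Proof.
move=> k_gt0 L_gt0 kL_le.
apply: (degree_le_param (g := fun j' : 'I_k => if val j' == 0 then k * L + k else k * L.-1 + val j')).
by move=> u; rewrite /chain /= inordK //; apply: chain_adj_cut_nbrs.
Qed.

Lemma chain_mod_proper k L x y : 0 < k -> chain_adj k L false x y -> x %% k != y %% k.
Proof.
move=> k_gt0.
suff proper a b : chain_lt k L false a b -> a %% k != b %% k.
  by case/orP => /proper //; rewrite eq_sym.
move=> /(chain_lt_shape k_gt0) [q [r [r_lt [-> [[r' [/andP [r_lt' r'_lt] ->]]|[r_gt0 ->]]]]]].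
  by rewrite !modn_block //; lia.
by rewrite modn_block // modn_block_end; lia.
Qed.

(* Past the cut the residues are shifted by one, so that the two ends of the
   single edge [{k L, k L + k}] get the colours [0] and [1]. *)
Definition cut_colour k L x := (x %% k + (k * L < x)) %% k.

Lemma cut_colour_proper k L x y : 1 < k -> chain_adj k L true x y ->
  cut_colour k L x != cut_colour k L y.
Proof.
rewrite /cut_colour => k_gt1; have k_gt0 : 0 < k by lia.
suff proper a b : chain_lt k L true a b ->
    (a %% k + (k * L < a)) %% k != (b %% k + (k * L < b)) %% k.
  by case/orP => /proper //; rewrite eq_sym.
rewrite chain_lt_cut; case: eqP => [_ /andP [/eqP -> /eqP ->]|a_blk].
  rewrite -{1 3}[k * L]addn0 modn_block // modn_block_end addn0 ltnn.
  have -> : k * L < k * L + k by lia.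
  by rewrite mod0n modn_small.
move/(chain_lt_shape k_gt0) => [q [r [r_lt [a_eq [[r' [/andP [r_lt' r'_lt] b_eq]]|[r_gt0 b_eq]]]]]];
  move: a_blk; rewrite a_eq divn_block // => q_neq; rewrite b_eq.
- have [q_lt|q_ge] := ltnP q L.
    have -> : (k * L < k * q + r) = false by apply/negbTE; rewrite -leqNgt; nia.
    have -> : (k * L < k * q + r') = false by apply/negbTE; rewrite -leqNgt; nia.
    by rewrite !modn_block // !addn0 !modn_small //; lia.
  have -> : (k * L < k * q + r) = true by apply/idP; nia.
  have -> : (k * L < k * q + r') = true by apply/idP; nia.
  rewrite !modn_block // !addn1 !modn_succ //.
  by case: (r.+1 =P k) => ?; case: (r'.+1 =P k) => ?; apply/eqP; lia.
- have [q_lt|q_ge] := ltnP q L.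
    have -> : (k * L < k * q + r) = false by apply/negbTE; rewrite -leqNgt; nia.
    have -> : (k * L < k * q + k) = false by apply/negbTE; rewrite -leqNgt; nia.
    by rewrite modn_block // modn_block_end !addn0 mod0n !modn_small //; lia.
  have -> : (k * L < k * q + r) = true by apply/idP; nia.
  have -> : (k * L < k * q + k) = true by apply/idP; nia.
  rewrite modn_block // modn_block_end !addn1 !modn_succ //.
  by case: (r.+1 =P k) => ?; case: (1 =P k) => ?; apply/eqP; lia.
Qed.

Lemma chain_symmetric k L cut m : symmetric (chain k L cut m).
Proof. by move=> x y; rewrite /chain /chain_adj orbC. Qed.

Lemma chain_irreflexive k L cut m : 0 < k -> irreflexive (chain k L cut m).
Proof.
move=> k_gt0 x; rewrite /chain /chain_adj orbb /chain_lt.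
case: (cut && _); last by rewrite ltnn.
by apply/negbTE/negP => /andP [/eqP -> /eqP]; lia.
Qed.

Lemma chain_colorable k L m : 0 < k -> partially_colorable k k (chain k L false m).
Proof.
move=> k_gt0; exists (fun x => Ordinal (ltn_pmod (val x) k_gt0)).
apply: proper_partial_coloring => v u /(chain_mod_proper k_gt0) neq.
by apply/negP => /eqP [] /eqP; rewrite eq_sym; apply/negP.
Qed.

Lemma cut_chain_colorable k L m : 1 < k -> partially_colorable k k (chain k L true m).
Proof.
move=> k_gt1; have k_gt0 : 0 < k by lia.
exists (fun x => Ordinal (ltn_pmod (val x %% k + (k * L < val x)) k_gt0)).
apply: proper_partial_coloring => v u /(cut_colour_proper k_gt1) neq.
by apply/negP => /eqP [] /eqP; rewrite eq_sym; apply/negP.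
Qed.

Section ChainColourings.

Variables (k L m : nat) (cut : bool) (gamma : 'I_m.+1 -> 'I_k).
Hypotheses (k_gt0 : 0 < k) (gamma_col : partial_coloring k (chain k L cut m.+1) gamma).

(* Otherwise the [k + 1] vertices of the gadget would carry [k + 1] colours:
   its inner vertices have degree [k], so they differ from all their neighbours. *)
Lemma gadget_ends_same_colour i : k * i + k <= m -> (cut -> i != L) ->
  gamma (inord (k * i)) = gamma (inord (k * i + k)).
Proof.
move=> gadget_le i_uncut; apply/eqP; apply/negPn/negP => ends_neq.
pose f : 'I_k.+1 -> 'I_k := fun j => gamma (inord (k * i + j)).
have f_neq (a b : 'I_k.+1) : a < b -> f a != f b.
  move=> ab; have b_le : (b : nat) <= k by rewrite -ltnS.
  case ends : ((a == 0 :> nat) && (b == k :> nat)).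
    by move: ends => /andP [/eqP a0 /eqP bk]; rewrite /f a0 bk addn0.
  have ab_edge : chain_lt k L cut (k * i + a) (k * i + b).
    by apply: chain_lt_in_gadget => //; [rewrite ab | rewrite ends].
  have [a0|a_gt0] := posnP a.
    have b_inner : 0 < b < k.
      apply/andP; split; first by lia.
      by move: ends; rewrite a0 eqxx /= => /negbT; lia.
    have ba : chain k L cut m.+1 (inord (k * i + b)) (inord (k * i + a)).
      by rewrite /chain /chain_adj /= !inordK ?ab_edge ?orbT //; lia.
    by apply: (partial_coloring_low_degree gamma_col (chain_inner_degree_le _ _ _ _) ba); lia.
  have a_inner : 0 < a < k by apply/andP; split; lia.
  have ab' : chain k L cut m.+1 (inord (k * i + a)) (inord (k * i + b)).
    by rewrite /chain /chain_adj /= !inordK ?ab_edge //; lia.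
  by rewrite eq_sym; apply: (partial_coloring_low_degree gamma_col (chain_inner_degree_le _ _ _ _) ab'); lia.
have f_inj : injective f.
  by move=> a b fab; case: (ltngtP a b) => [/f_neq|/f_neq|/val_inj //]; rewrite fab eqxx.
by have := leq_card f f_inj; rewrite !card_ord ltnn.
Qed.

Lemma chain_colour_const a i : k * (a + i) <= m -> (cut -> L < a \/ a + i <= L) ->
  gamma (inord (k * (a + i))) = gamma (inord (k * a)).
Proof.
elim: i => [|i IH] stretch_le uncut; first by rewrite addn0.
rewrite addnS mulnSr -gadget_ends_same_colour; last by move=> /uncut; lia.
  by apply: IH => [|/uncut]; lia.
by move: stretch_le; rewrite addnS mulnSr.
Qed.

End ChainColourings.

Lemma chain_ends_same_colour k L m (gamma : 'I_m.+1 -> 'I_k) : 0 < k -> m = k * (2 * L) ->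
  partial_coloring k (chain k L false m.+1) gamma -> gamma (inord m) = gamma (inord 0).
Proof.
move=> k_gt0 m_eq gamma_col.
have := chain_colour_const k_gt0 gamma_col (a := 0) (i := 2 * L).
by rewrite add0n muln0 -m_eq; apply.
Qed.

Lemma cut_chain_ends_differ k L m (gamma : 'I_m.+1 -> 'I_k) : 0 < k -> 0 < L ->
  m = k * (2 * L) -> partial_coloring k (chain k L true m.+1) gamma ->
  gamma (inord m) != gamma (inord 0).
Proof.
move=> k_gt0 L_gt0 m_eq gamma_col.
have left_const : gamma (inord (k * L)) = gamma (inord 0).
  have := chain_colour_const k_gt0 gamma_col (a := 0) (i := L).
  by rewrite add0n muln0; apply; lia.
have right_const : gamma (inord m) = gamma (inord (k * L.+1)).
  have stretch_eq : k * (L.+1 + L.-1) = m by rewrite m_eq; congr (k * _); lia.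
  have := chain_colour_const k_gt0 gamma_col (a := L.+1) (i := L.-1).
  by rewrite stretch_eq; apply; lia.
have cut_edge : chain k L true m.+1 (inord (k * L)) (inord (k * L.+1)).
  rewrite /chain /chain_adj /= !inordK ?m_eq; try nia.
  by rewrite chain_lt_cut -{1 3 4}[k * L]addn0 divn_block // addn0 !eqxx mulnSr eqxx.
rewrite right_const -left_const.
by apply: (partial_coloring_low_degree gamma_col _ cut_edge); apply: chain_cut_degree_le; nia.
Qed.

Section ChainViews.

Variables (d k L m : nat) (id : 'I_m.+1 -> idT d m.+1).
Hypothesis k_gt0 : 0 < k.

Lemma chain_start_views_agree r : r < L ->
  view_of (chain k L false m.+1) id r (inord 0) = view_of (chain k L true m.+1) id r (inord 0).
Proof.
move=> r_lt; apply: (view_agree (S := [set x : 'I_m.+1 | val x %/ k < L])).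
  by move=> x y; rewrite inE => x_far; exact: chain_adj_cut_far k_gt0 (or_introl x_far).
apply/subsetP => u u_in; rewrite inE.
have block_lip x y : chain k L false m.+1 x y -> val y %/ k <= (val x %/ k).+1.
  by move/(chain_adj_block_close k_gt0) => [].
have := ball_potential_le block_lip u_in; rewrite /= inordK // div0n; lia.
Qed.

Lemma chain_end_views_agree r : m = k * (2 * L) -> r.+2 <= L ->
  view_of (chain k L false m.+1) id r (inord m) = view_of (chain k L true m.+1) id r (inord m).
Proof.
move=> m_eq r_le; apply: (view_agree (S := [set x : 'I_m.+1 | L.+2 <= val x %/ k])).
  by move=> x y; rewrite inE => x_far; exact: chain_adj_cut_far k_gt0 (or_intror x_far).
apply/subsetP => u u_in; rewrite inE.
have block_lip x y : chain k L false m.+1 x y -> 2 * L - val y %/ k <= (2 * L - val x %/ k).+1.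
  by move/(chain_adj_block_close k_gt0) => [] _; lia.
have m_blk : m %/ k = 2 * L by rewrite m_eq mulKn.
have := ball_potential_le block_lip u_in; rewrite /= inordK // m_blk; lia.
Qed.

End ChainViews.

Definition succ_id d n (v : 'I_n) : idT d n := inord v.+1.

Lemma succ_id_valid d n : 0 < d -> valid_ids (@succ_id d n).
Proof.
move=> d_gt0.
have val_id (v : 'I_n) : (succ_id d v : nat) = v.+1.
  rewrite /succ_id inordK // ltnS; apply: leq_trans (ltn_ord v) _.
  by rewrite -{1}[n]expn1 leq_pexp2l //; case: n v => [[]|].
split=> [a b /(f_equal (@nat_of_ord _))|v]; last by rewrite /= val_id.
by rewrite !val_id => -[] /val_inj.
Qed.

Lemma rounds_lt_blocks k L s : 3 <= k -> 3 <= L -> k ^ 3 * s < (k * (2 * L)).+1 -> s.+2 <= L.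
Proof.
move=> k_ge3 L_ge3; rewrite !expnS expn0 muln1 => s_lt.
rewrite leqNgt; apply/negP => s_ge.
have ks_le : 9 * (k * s) <= k * k * (k * s) by apply: leq_mul => //; nia.
have kL_le : k * L <= k + k * s by rewrite -mulnS; apply: leq_mul => //; lia.
have k2_le : k * 2 <= k * s by apply: leq_mul => //; lia.
lia.
Qed.

Lemma chain_ends_not_both_fast d k L m (A : local_alg d k) (id : 'I_m.+1 -> idT d m.+1) s0 sm :
  1 < k -> 0 < L -> m = k * (2 * L) -> solves_partial_coloring A -> valid_ids id ->
  s0.+2 <= L -> A m.+1 s0 (view_of (chain k L false m.+1) id s0 (inord 0)) <> None ->
  sm.+2 <= L -> A m.+1 sm (view_of (chain k L false m.+1) id sm (inord m)) <> None ->
  False.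
Proof.
move=> k_gt1 L_gt0 m_eq solves id_valid s0_le stop0 sm_le stopm.
have k_gt0 : 0 < k by lia.
have [g1 [g1_col out1]] := solves _ _ (@chain_symmetric k L false m.+1)
  (@chain_irreflexive k L false m.+1 k_gt0) (@chain_colorable k L m.+1 k_gt0) id id_valid.
have [g2 [g2_col out2]] := solves _ _ (@chain_symmetric k L true m.+1)
  (@chain_irreflexive k L true m.+1 k_gt0) (@cut_chain_colorable k L m.+1 k_gt1) id id_valid.
have out_eq v s : (forall r, r <= s -> view_of (chain k L false m.+1) id r v =
                                      view_of (chain k L true m.+1) id r v) ->
    A m.+1 s (view_of (chain k L false m.+1) id s v) <> None -> g1 v = g2 v.
  move=> views stop; have [t1 out1v] := out1 v; have [t2 out2v] := out2 v.
  exact: outputs_agree views stop out1v out2v.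
have out0 : g1 (inord 0) = g2 (inord 0).
  by apply: out_eq stop0 => r r_le; apply: (chain_start_views_agree id k_gt0); lia.
have outm : g1 (inord m) = g2 (inord m).
  by apply: out_eq stopm => r r_le; apply: (chain_end_views_agree id k_gt0 m_eq); lia.
have := cut_chain_ends_differ k_gt0 L_gt0 m_eq g2_col.
by rewrite -out0 -outm (chain_ends_same_colour k_gt0 m_eq g1_col) eqxx.
Qed.

Theorem theorem2 (k d : nat) (A : local_alg d k) :
  3 <= k -> 1 <= d -> solves_partial_coloring A ->
  exists c : nat, 0 < c /\
    forall N : nat, exists n : nat, N <= n /\
      exists (e : rel 'I_n), [/\ symmetric e, irreflexive e & partially_colorable k k e] /\
      exists id : 'I_n -> idT d n, valid_ids id /\
      exists v : 'I_n,
        forall s : nat, c * k ^ 3 * s < n -> A n s (view_of e id s v) = None.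
Proof.
move=> k_ge3 d_gt0 solves; have k_gt0 : 0 < k by lia.
exists 1; split=> // N; set L := N.+3; set m := k * (2 * L).
exists m.+1; split; first by rewrite /m /L; nia.
set e := chain k L false m.+1; set id := @succ_id d m.+1.
exists e; split.
  split; [exact: chain_symmetric | exact: chain_irreflexive | exact: chain_colorable].
exists id; split; first exact: succ_id_valid.
have fast_rounds s : 1 * k ^ 3 * s < m.+1 -> s.+2 <= L.
  by rewrite mul1n; apply: rounds_lt_blocks.
have [slow0|[s0 [s0_lt stop0]]] := forall_or_counterexample
  (fun s => 1 * k ^ 3 * s < m.+1) (fun s => A m.+1 s (view_of e id s (inord 0)) = None).
  by exists (inord 0).
have [slowm|[sm [sm_lt stopm]]] := forall_or_counterexample
  (fun s => 1 * k ^ 3 * s < m.+1) (fun s => A m.+1 s (view_of e id s (inord m)) = None).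
  by exists (inord m).
exfalso; apply: (chain_ends_not_both_fast (L := L) _ _ (erefl m) solves
  (succ_id_valid m.+1 d_gt0) (fast_rounds _ s0_lt) stop0 (fast_rounds _ sm_lt) stopm); lia.
Qed.
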